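(* Let $m,n\geq 2$ and let $V\subset [m]\times[n]$. Then: (i) if $V$ is a forest with $k$ connected components, then $V$ is complete if and only if $|V|=m+n-k$; (ii) if $|V|=m+n-1$, then $V$ is a tree if and only if $V$ is complete and connected; (iii) if $V$ is complete and connected, then $|V|\geq m+n-1$, and $|V|=m+n-1$ if and only if $V$ is a tree.
   Context: $[m]=\{1,\dots,m\}$. $G_{m,n}$ is the graph with vertex set $[m]\times[n]$ in which two distinct vertices $u=(u_1,u_2)$, $v=(v_1,v_2)$ are adjacent iff $u_1=v_1$ or $u_2=v_2$ (same row or same column). A subset $V\subset[m]\times[n]$ is regarded as the induced subgraph of $G_{m,n}$; a path in $V$ is a sequence of vertices of $V$ in which consecutive vertices are adjacent; $V$ is connected if any two distinct vertices of $V$ are joined by a path in $V$, and connected components are understood for this induced graph. A circuit is a cyclic sequence $v_0,v_1,\dots,v_{s-1}$ ($s\ge 4$) of pairwise distinct vertices $v_k=(i_k,j_k)$ such that, with indices taken modulo $s$, $v_k$ and $v_{k+1}$ are adjacent and $(i_{k+2}-i_k)(j_{k+2}-j_k)\neq 0$ for every $k$ (no three cyclically consecutive vertices lie in one row or one column). $V$ is a forest if it contains no circuit, and a tree if it is a connected forest. $V$ is complete if $\{i:(i,j)\in V\}=[m]$ and $\{j:(i,j)\in V\}=[n]$. *)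

From mathcomp Require Import all_boot.
Set Implicit Arguments. Unset Strict Implicit. Unset Printing Implicit Defensive.

Section Rook.
Variables m n : nat.
Definition vtx := ('I_m * 'I_n)%type.

Definition adj (u v : vtx) : bool := (u != v) && ((u.1 == v.1) || (u.2 == v.2)).

Definition adjV (V : {set vtx}) : rel vtx :=
  fun u v => [&& u \in V, v \in V & adj u v].

Definition connectedV (V : {set vtx}) : Prop :=
  forall u v, u \in V -> v \in V -> u != v -> connect (adjV V) u v.

Definition components (V : {set vtx}) : {set {set vtx}} :=
  [set [set v in V | connect (adjV V) u v] | u in V].

(* a circuit in V: a cyclic sequence of s >= 4 pairwise distinct vertices of V,
   cyclically consecutive ones adjacent, and no three cyclically consecutive
   ones in a common row or column: (i_{k+2}-i_k)(j_{k+2}-j_k) <> 0. *)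
Definition is_circuit (V : {set vtx}) (c : seq vtx) : Prop :=
  let s := size c in
  [/\ 4 <= s, uniq c, {subset c <= V},
      forall k, k < s -> forall x0, adj (nth x0 c k) (nth x0 c ((k + 1) %% s)) &
      forall k, k < s -> forall x0,
        ((nth x0 c ((k + 2) %% s)).1 != (nth x0 c k).1) &&
        ((nth x0 c ((k + 2) %% s)).2 != (nth x0 c k).2)].

Definition forest (V : {set vtx}) : Prop := forall c, ~ is_circuit V c.

Definition tree (V : {set vtx}) : Prop := connectedV V /\ forest V.

Definition complete (V : {set vtx}) : Prop :=
  (forall i : 'I_m, exists j : 'I_n, (i, j) \in V) /\
  (forall j : 'I_n, exists i : 'I_m, (i, j) \in V).
End Rook.

From mathcomp Require Import all_boot zify.
Set Implicit Arguments. Unset Strict Implicit. Unset Printing Implicit Defensive.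

(* Write R(V), C(V) for the sets of rows and columns met by V and K(V) for the
   number of components of V.  Then |R(V)| + |C(V)| <= |V| + K(V), with equality
   exactly when V is a forest; as V is complete iff |R(V)| = m and |C(V)| = n,
   (i)-(iii) are arithmetic consequences.  If some vertex v is alone in its row (or column), all its neighbours lie
   in its column, so they are pairwise adjacent: v lies on no circuit, and
   deleting v lowers both sides by the same amount.  Otherwise every vertex has
   a row-mate and a column-mate; walking alternately along rows and columns
   eventually closes a circuit, and every line met by V contains two of its
   points, so |R(V)| + |C(V)| <= |V| < |V| + K(V). *)

Lemma card_imset_setD1 (aT rT : finType) (f : aT -> rT) (A : {set aT}) a :
  a \in A -> #|f @: A| = (f a \notin f @: (A :\ a)) + #|f @: (A :\ a)|.
Proof. by move=> aA; rewrite -{1}(setD1K aA) imsetU1 cardsU1. Qed.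

Lemma card_imset_kernel (aT rT1 rT2 : finType) (f : aT -> rT1) (g : aT -> rT2)
    (A : {set aT}) :
  {in A &, forall a b, (f a == f b) = (g a == g b)} -> #|f @: A| = #|g @: A|.
Proof.
have [N] := ubnP #|A|; elim: N A => // N IH A.
have [-> _ _|[a aA] ltAN fg] := set_0Vmem A; first by rewrite !imset0 !cards0.
have fgD1 : {in A :\ a &, forall x y, (f x == f y) = (g x == g y)}.
  by move=> x y /setD1P[_ xA] /setD1P[_ yA]; apply: fg.
rewrite !(card_imset_setD1 _ aA) IH //; last by rewrite (cardsD1 a) aA in ltAN.
congr (~~ _ + _); apply/imsetP/imsetP => -[x xA' /eqP e]; exists x => //;
  have /setD1P[_ xA] := xA'; apply/eqP; by [rewrite -fg | rewrite fg].
Qed.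

Lemma double_card_imset_le (aT rT : finType) (f : aT -> rT) (A : {set aT}) :
  {in A, forall a, exists2 b, b \in A :\ a & f b = f a} -> 2 * #|f @: A| <= #|A|.
Proof.
move=> twin; rewrite -(sum1_card (mem A)) (partition_big_imset f A) /=.
rewrite mulnC -sum_nat_const; apply: leq_sum => _ /imsetP[a aA ->].
have [b /setD1P[ba bA] fb] := twin a aA.
rewrite (bigD1 a) ?aA ?eqxx //= (bigD1 b) /= ?bA ?fb ?eqxx ?ba // addnA leq_addr.
Qed.

Lemma card_imset_surj (aT rT : finType) (f : aT -> rT) (A : {set aT}) :
  #|f @: A| = #|rT| <-> forall y, exists2 x, x \in A & f x = y.
Proof.
rewrite -cardsT; split=> [fA y|surj].
  have /eqP fAT : f @: A == setT by rewrite eqEcard subsetT fA leqnn.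
  have /imsetP[x xA ->] : y \in f @: A by rewrite fAT inE.
  by exists x.
suff -> : f @: A = setT by [].
apply/setP => y; rewrite inE; have [x xA <-] := surj y.
exact: imset_f.
Qed.

Lemma connect_homo (T1 T2 : finType) (e1 : rel T1) (e2 : rel T2) (h : T1 -> T2) :
  (forall x y, e1 x y -> connect e2 (h x) (h y)) ->
  forall x y, connect e1 x y -> connect e2 (h x) (h y).
Proof.
move=> he x _ /connectP[p p_e1 ->]; elim: p x p_e1 => //= y p IHp x /andP[xy].
by move/IHp; apply: connect_trans (he _ _ xy).
Qed.

Section RookGraph.
Variables m n : nat.
Local Notation T := (vtx m n).
Implicit Types (V W : {set T}) (u v x y : T) (w c : seq T).

Lemma adjC u v : adj u v = adj v u.
Proof. by rewrite /adj eq_sym (eq_sym u.1) (eq_sym u.2). Qed.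

Lemma adjV_sym V : symmetric (adjV V).
Proof. by move=> u v; rewrite /adjV adjC andbCA. Qed.

Lemma connect_adjV_sym V : connect_sym (adjV V).
Proof. exact/sym_connect_sym/adjV_sym. Qed.

Lemma connect_adjV_subset V W :
  W \subset V -> subrel (connect (adjV W)) (connect (adjV V)).
Proof.
move=> sWV; apply: connect_sub => u v /and3P[uW vW uv]; apply: connect1.
by rewrite /adjV (subsetP sWV _ uW) (subsetP sWV _ vW).
Qed.

Definition component V u : {set T} := [set x in V | connect (adjV V) u x].

Lemma componentsE V : components V = component V @: V.
Proof. by []. Qed.

Lemma eq_component V u v : u \in V -> v \in V ->
  (component V u == component V v) = connect (adjV V) u v.
Proof.
move=> uV vV; apply/eqP/idP => [eq_uv|uv].
  have : v \in component V v by rewrite inE vV connect0.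
  by rewrite -eq_uv inE => /andP[].
apply/setP => x; rewrite !inE.
by rewrite (same_connect (connect_adjV_sym V) uv).
Qed.

Lemma card_components_connected V v :
  connectedV V -> v \in V -> #|components V| = 1.
Proof.
move=> V_conn vV; apply/eqP/cards1P; exists (component V v).
apply/setP => X; rewrite inE.
apply/imsetP/eqP => [[u uV ->]|->]; last by exists v.
apply/eqP; rewrite eq_component //.
by have [->|uv] := eqVneq u v; [exact: connect0 | exact: V_conn].
Qed.

Lemma card_components_isolated V v : v \in V -> {in V, forall u, ~~ adj v u} ->
  #|components V| = (#|components (V :\ v)|).+1.
Proof.
move=> vV v_iso; set V' := V :\ v.
have alone x : connect (adjV V) v x -> x = v.
  move=> /connectP[[|y p] //= /andP[/and3P[_ yV vy] _] _].
  by move: (v_iso y yV); rewrite vy.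
have adjV_restrict x y : adjV V x y -> adjV V' x y.
  move=> /and3P[xV yV xy]; rewrite /adjV !inE xV yV xy !andbT.
  apply/andP; split; apply/eqP => e.
    by move: (v_iso y yV); rewrite -e xy.
  by move: (v_iso x xV); rewrite adjC -e xy.
have compV'E : {in V', component V =1 component V'}.
  move=> u /setD1P[uv uV]; apply/setP => x; rewrite !inE.
  apply/andP/andP => [[xV ux]|[/andP[_ xV] ux]]; last first.
    by split=> //; apply: connect_adjV_subset (subsetDl _ _) _ _ ux.
  split; last by apply: connect_sub ux => a b ab; apply/connect1/adjV_restrict.
  rewrite xV andbT; apply: contra_neq uv => xv.
  by apply: alone; rewrite connect_adjV_sym -xv.
have compv : component V v = [set v].
  apply/setP => x; rewrite !inE; apply/andP/eqP => [[_ /alone //]|->].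
  by rewrite vV connect0.
rewrite !componentsE (card_imset_setD1 _ vV) (eq_in_imset compV'E) compv.
suff -> : [set v] \notin component V' @: V' by [].
apply/imsetP => -[u uV' e].
have : u \in component V' u by rewrite inE uV' connect0.
by rewrite -e inE => /eqP eu; move: uV'; rewrite eu !inE eqxx.
Qed.

Definition simplicial V v :=
  {in V &, forall a b, adj v a -> adj v b -> a != b -> adj a b}.

Lemma card_components_simplicial V v u : v \in V -> u \in V -> adj v u ->
  simplicial V v -> #|components V| = #|components (V :\ v)|.
Proof.
move=> vV uV vu v_simp; set V' := V :\ v.
have uV' : u \in V'.
  by rewrite !inE uV andbT; move: vu; rewrite /adj eq_sym => /andP[].
have u_reach z : z \in V -> z != v -> adj v z -> connect (adjV V') u z.
  move=> zV zv vz; have [<-|uz] := eqVneq u z; first exact: connect0.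
  by apply: connect1; rewrite /adjV uV' !inE zv zV /= v_simp.
have connect_V' x y : x \in V' -> y \in V' ->
    connect (adjV V) x y = connect (adjV V') x y.
  move=> xV' yV'; apply/idP/idP; last first.
    exact: connect_adjV_subset (subsetDl _ _) _ _.
  (* Neighbours of v are pairwise adjacent, so a path may skip v via u. *)
  pose bypass z := if z == v then u else z.
  have bypass_homo a b : adjV V a b -> connect (adjV V') (bypass a) (bypass b).
    move=> /and3P[aV bV ab]; rewrite /bypass.
    have [av|av] := eqVneq a v; have [bv|bv] := eqVneq b v.
    - by move: ab; rewrite av bv /adj eqxx.
    - by apply: u_reach; rewrite // -av.
    - by rewrite connect_adjV_sym; apply: u_reach; rewrite // adjC -bv.
    - by apply: connect1; rewrite /adjV !inE av bv aV bV.
  move=> /(connect_homo bypass_homo); rewrite /bypass.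
  by move: xV' yV' => /setD1P[/negbTE -> _] /setD1P[/negbTE -> _].
have -> : components V = component V @: V'.
  rewrite componentsE -{2}(setD1K vV) imsetU1; apply/setUidPr; rewrite sub1set.
  apply/imsetP; exists u => //; apply/eqP; rewrite eq_component //.
  by apply: connect1; rewrite /adjV vV uV.
rewrite componentsE; apply: card_imset_kernel => x y xV' yV'.
have /setD1P[_ xV] := xV'; have /setD1P[_ yV] := yV'.
by rewrite !eq_component // connect_V'.
Qed.

Lemma forest_subset V W : W \subset V -> forest V -> forest W.
Proof.
move=> sWV V_forest c [c4 c_uniq cW c_adj c_turn].
apply: (V_forest c); split=> //.
by move=> x /cW /(subsetP sWV).
Qed.

Lemma forest_setD1_simplicial V v : v \in V -> simplicial V v ->
  forest (V :\ v) -> forest V.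
Proof.
move=> vV v_simp forest' c c_circ; apply: (forest' c).
have [c4 c_uniq cV c_adj c_turn] := c_circ.
have [vc|vNc] := boolP (v \in c); last first.
  split=> // x xc; rewrite !inE cV // andbT.
  by apply: contraNneq vNc => <-.
exfalso; set s := size c in c4 c_adj c_turn.
pose k := index v c; pose k' := (k + s.-1) %% s.
have lt_ks : k < s by rewrite index_mem.
have lt_k's : k' < s by rewrite ltn_mod; lia.
have lt_k1s : (k + 1) %% s < s by rewrite ltn_mod; lia.
have next_k' : (k' + 1) %% s = k.
  by rewrite modnDml -addnA addn1 prednK ?modnDr ?modn_small //; lia.
have next2_k' : (k' + 2) %% s = (k + 1) %% s.
  by rewrite modnDml -addnA (_ : s.-1 + 2 = 1 + s) ?addnA ?modnDr //; lia.
set a := nth v c k'; set b := nth v c ((k + 1) %% s).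
have va : adj v a by have := c_adj k' lt_k's v; rewrite next_k' nth_index // adjC.
have vb : adj v b by have := c_adj k lt_ks v; rewrite nth_index.
have /andP[ba1 ba2] := c_turn k' lt_k's v; rewrite next2_k' -/a -/b in ba1 ba2.
have ab : a != b by apply: contraNneq ba1 => ->.
have := v_simp a b (cV _ (mem_nth v lt_k's)) (cV _ (mem_nth v lt_k1s)) va vb ab.
by rewrite /adj ab eq_sym (negbTE ba1) eq_sym (negbTE ba2).
Qed.

Definition linked b u v :=
  (u != v) && (if b then u.1 == v.1 else u.2 == v.2).

Lemma linked_adj b u v : linked b u v -> adj u v.
Proof. by case: b => /andP[uv e]; rewrite /adj uv e ?orbT. Qed.

Lemma linked_turn b u v x : linked b u v -> linked (~~ b) v x ->
  (x.1 != u.1) && (x.2 != u.2).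
Proof.
case: u v x => [u1 u2] [v1 v2] [x1 x2]; rewrite /linked !xpair_eqE /=.
by case: b => /andP[uv /eqP e] /andP[vx /eqP e']; subst; move: uv vx;
  rewrite !eqxx ?andbT /= !(eq_sym x1) !(eq_sym x2) => -> ->.
Qed.

Lemma linked_trans b u v x :
  linked b u v -> linked b v x -> u != x -> linked b u x.
Proof.
by rewrite /linked; case: b => /andP[_ /eqP e] /andP[_ /eqP e'] ->;
  rewrite e e' eqxx.
Qed.

Lemma alternating_circuit V c p :
  0 < size c -> ~~ odd (size c) -> uniq c -> {subset c <= V} ->
  (forall k x0, k < size c ->
     linked (odd (k + p)) (nth x0 c k) (nth x0 c ((k + 1) %% size c))) ->
  is_circuit V c.
Proof.
move=> c_gt0 c_even c_uniq cV c_link.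
have [y0 _] : exists y0 : T, y0 \in c.
  by case: (c) c_gt0 => // y0 ? _; exists y0; exact: mem_head.
set s := size c in c_gt0 c_even c_link *.
have turn k x0 : k < s ->
    ((nth x0 c ((k + 2) %% s)).1 != (nth x0 c k).1) &&
    ((nth x0 c ((k + 2) %% s)).2 != (nth x0 c k).2).
  move=> lt_ks; apply: linked_turn (c_link k x0 lt_ks) _.
  have := c_link _ x0 (ltn_pmod (k + 1) c_gt0).
  rewrite modnDml -addnA oddD (odd_mod _ (negbTE c_even)) !oddD.
  by case: (odd k); case: (odd p).
split=> // [||k lt_ks x0]; last exact: turn.
- have s_ne13 : s <> 1 /\ s <> 3 by split=> s13; rewrite s13 in c_even.
  have s_ne2 : s <> 2.
    by move=> s2; have := turn 0 y0 c_gt0; rewrite s2 modnn eqxx.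
  rewrite -/s; lia.
- by move=> k lt_ks x0; apply: linked_adj (c_link k x0 lt_ks).
Qed.

Definition alt_trail V w :=
  [/\ uniq w, {subset w <= V} &
      forall i x0, i.+1 < size w -> linked (odd i) (nth x0 w i) (nth x0 w i.+1)].

Definition leafless V :=
  forall v b, v \in V -> exists2 u, u \in V & linked b v u.

Lemma alt_trail_rcons V w u x0 : alt_trail V w -> u \in V -> u \notin w ->
  linked (odd (size w).-1) (nth x0 w (size w).-1) u -> alt_trail V (rcons w u).
Proof.
move=> [w_uniq wV w_link] uV uNw last_u; split.
- by rewrite rcons_uniq uNw.
- by move=> x; rewrite mem_rcons inE => /predU1P[->|/wV].
move=> i y0; rewrite size_rcons ltnS !nth_rcons => lt_iw; rewrite lt_iw.
have [lt_i1w|] := ltnP i.+1 (size w); first exact: w_link.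
rewrite leq_eqVlt ltnNge lt_iw orbF => /eqP e; rewrite e eqxx.
by move: last_u; rewrite e /= (set_nth_default y0).
Qed.

Lemma alt_trail_circuit V w j x0 : alt_trail V w ->
  j < (size w).-1 -> odd j != odd (size w).-1 ->
  linked (odd (size w).-1) (nth x0 w (size w).-1) (nth x0 w j) ->
  is_circuit V (drop j w).
Proof.
move=> [w_uniq wV w_link] lt_jL odd_jL close.
have size_d : size (drop j w) = ((size w).-1 - j).+1 by rewrite size_drop; lia.
apply: (alternating_circuit (p := j)); rewrite ?size_d //.
- by move: odd_jL; rewrite /= oddB ?(ltnW lt_jL) //; case: odd; case: odd.
- exact: drop_uniq.
- by move=> x /mem_drop /wV.
move=> k y0 lt_k; rewrite !nth_drop !(set_nth_default x0 y0); try lia.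
have [lt_kLj|ge_kLj] := ltnP k ((size w).-1 - j).
  rewrite modn_small ?addn1 // addnS addnC; apply: w_link; lia.
have [-> jk] : (k + 1) %% ((size w).-1 - j).+1 = 0 /\ k + j = (size w).-1.
  by rewrite (_ : k + 1 = ((size w).-1 - j).+1) ?modnn; lia.
by rewrite addn0 (addnC j) jk.
Qed.

Lemma alt_trail_extend V w : leafless V -> alt_trail V w -> 0 < size w ->
  (exists u, alt_trail V (rcons w u)) \/ (exists c, is_circuit V c).
Proof.
move=> V_leafless w_trail w_gt0; have [w_uniq wV w_link] := w_trail.
have [x0 _] : exists x0 : T, x0 \in w.
  by case: (w) w_gt0 => // x0 ? _; exists x0; exact: mem_head.
set L := (size w).-1; set x := nth x0 w L.
have size_w : size w = L.+1 by rewrite prednK.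
have lt_Lw : L < size w by rewrite size_w.
have [u uV xu] := V_leafless x (odd L) (wV _ (mem_nth x0 lt_Lw)).
have [uw|uNw] := boolP (u \in w); last first.
  by left; exists u; exact: alt_trail_rcons w_trail uV uNw xu.
right; pose j := index u w.
have xj : linked (odd L) x (nth x0 w j) by rewrite nth_index.
have lt_jL : j < L.
  have : j < size w by rewrite index_mem.
  have : j != L by apply: contraTneq xj => ->; rewrite /linked eqxx.
  lia.
(* If w_j has the wrong parity, x, w_j and w_(j+1) share a line: use w_(j+1). *)
have [j' [lt_j'L odd_j'L xj']] : exists j', [/\ j' < L, odd j' != odd L &
    linked (odd L) x (nth x0 w j')].
  have [odd_jL|] := eqVneq (odd j) (odd L); last by exists j.
  have lt_j1L : j.+1 < L.
    have : j.+1 != L.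
      by apply/eqP => j1L; move: odd_jL; rewrite -j1L /=; case: (odd j).
    lia.
  exists j.+1; split=> //; first by rewrite /= odd_jL; case: (odd L).
  apply: linked_trans xj _ _; first by rewrite -odd_jL; apply: w_link; lia.
  by rewrite /x nth_uniq ?(ltn_trans lt_j1L lt_Lw) // neq_ltn lt_j1L orbT.
by exists (drop j' w); apply: alt_trail_circuit xj'.
Qed.

Lemma leafless_not_forest V v : leafless V -> v \in V -> ~ forest V.
Proof.
move=> V_leafless vV V_forest.
have long_trail k : exists w, alt_trail V w /\ size w = k.+1.
  elim: k => [|k [w [w_trail size_w]]].
    by exists [:: v]; split=> //; split=> // x; rewrite inE => /eqP ->.
  have w_gt0 : 0 < size w by rewrite size_w.
  have [[u uw_trail]|[c /V_forest //]] :=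
    alt_trail_extend V_leafless w_trail w_gt0.
  by exists (rcons w u); rewrite size_rcons size_w.
have [w [[/card_uniqP card_w wV _] size_w]] := long_trail #|V|.
have : #|w| <= #|V| by apply/subset_leq_card/subsetP.
by rewrite card_w size_w ltnn.
Qed.

Section LoneInLine.
Variables (T1 T2 : finType) (f : T -> T1) (g : T -> T2).
Hypothesis adjE :
  forall u v, adj u v = (u != v) && ((f u == f v) || (g u == g v)).
Variables (V : {set T}) (v : T).
Hypotheses (vV : v \in V) (v_lone : {in V :\ v, forall u, f u != f v}).

Lemma lone_simplicial : simplicial V v.
Proof.
have g_nbr u : u \in V -> adj v u -> g u = g v.
  move=> uV; rewrite adjE => /andP[vu /orP[/eqP fvu|/eqP //]].
  have uV' : u \in V :\ v by rewrite !inE eq_sym vu.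
  by have := v_lone uV'; rewrite fvu eqxx.
by move=> a b aV bV va vb ab; rewrite adjE ab (g_nbr a) ?(g_nbr b) ?eqxx ?orbT.
Qed.

Lemma lone_card_lines :
  #|f @: V| + #|g @: V| + #|components (V :\ v)| =
  #|f @: (V :\ v)| + #|g @: (V :\ v)| + #|components V| + 1.
Proof.
have fv_new : f v \notin f @: (V :\ v).
  by apply/imsetP => -[u uV' /eqP]; rewrite eq_sym (negbTE (v_lone uV')).
rewrite (card_imset_setD1 f vV) (card_imset_setD1 g vV) fv_new add1n.
have [/imsetP[u uV' gvu]|gv_new] := boolP (g v \in g @: (V :\ v));
  rewrite ?add0n ?add1n.
  have /setD1P[uv uV] := uV'.
  have vu : adj v u by rewrite adjE eq_sym uv gvu eqxx orbT.
  by rewrite (card_components_simplicial vV uV vu lone_simplicial) !addSn addn1.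
have v_iso : {in V, forall u, ~~ adj v u}.
  move=> u uV; rewrite adjE; have [//|vu] := eqVneq v u.
  have uV' : u \in V :\ v by rewrite !inE eq_sym vu.
  rewrite eq_sym (negbTE (v_lone uV')) eq_sym /=.
  by apply: contra gv_new => /eqP <-; apply: imset_f.
by rewrite (card_components_isolated vV v_iso) !addSn !addnS addn0.
Qed.
End LoneInLine.

Definition rows V := [set v.1 | v in V].
Definition cols V := [set v.2 | v in V].

Lemma lone_removal V v b : v \in V -> {in V, forall u, ~~ linked b v u} ->
  simplicial V v /\
  #|rows V| + #|cols V| + #|components (V :\ v)| =
  #|rows (V :\ v)| + #|cols (V :\ v)| + #|components V| + 1.
Proof.
move=> vV v_lone.
have lone u : u \in V :\ v -> if b then u.1 != v.1 else u.2 != v.2.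
  move=> /setD1P[uv uV]; have := v_lone u uV.
  by rewrite /linked eq_sym uv; case: (b); rewrite eq_sym.
pose row x : 'I_m := x.1; pose col x : 'I_n := x.2.
have adjE x y : adj x y = (x != y) && ((row x == row y) || (col x == col y)).
  by [].
have adjE' x y : adj x y = (x != y) && ((col x == col y) || (row x == row y)).
  by rewrite /adj orbC.
case: b {v_lone} lone => v_lone_line.
  split; first by apply: (lone_simplicial adjE); exact: v_lone_line.
  exact: (lone_card_lines adjE vV v_lone_line).
split; first by apply: (lone_simplicial adjE'); exact: v_lone_line.
have := lone_card_lines adjE' vV v_lone_line.
by rewrite -/(rows V) -/(cols V) -/(rows (V :\ v)) -/(cols (V :\ v)); lia.
Qed.

Lemma lone_or_leafless V :
  (exists v b, v \in V /\ {in V, forall u, ~~ linked b v u}) \/ leafless V.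
Proof.
have [/exists_inP[v vV /existsP[b /forall_inP v_lone]]|/exists_inPn no_lone] :=
  boolP [exists v in V, [exists b, [forall u in V, ~~ linked b v u]]].
  by left; exists v, b.
right=> v b vV; have := no_lone v vV; rewrite negb_exists => /forallP/(_ b).
by move=> /forall_inPn[u uV /negbNE]; exists u.
Qed.

Lemma card_rows_cols V :
  #|rows V| + #|cols V| <= #|V| + #|components V| /\
  (forest V <-> #|V| + #|components V| = #|rows V| + #|cols V|).
Proof.
have [N] := ubnP #|V|; elim: N V => // N IH V ltVN.
have [[v [b [vV v_lone]]]|V_leafless] := lone_or_leafless V.
  have [simp_v lines_v] := lone_removal vV v_lone.
  have [IHle IHforest] : #|rows (V :\ v)| + #|cols (V :\ v)| <=
      #|V :\ v| + #|components (V :\ v)| /\ (forest (V :\ v) <->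
      #|V :\ v| + #|components (V :\ v)| = #|rows (V :\ v)| + #|cols (V :\ v)|).
    by apply: IH; rewrite (cardsD1 v) vV in ltVN.
  have card_V : #|V| = #|V :\ v| + 1 by rewrite (cardsD1 v) vV addnC.
  have -> : forest V <-> forest (V :\ v).
    split; first exact: forest_subset (subsetDl _ _).
    exact: forest_setD1_simplicial.
  rewrite IHforest; split; [lia | split=> ?; lia].
have [->|[v vV]] := set_0Vmem V.
  rewrite /rows /cols componentsE !imset0 !cards0; split=> //; split=> // _.
  by move=> [|x c] [] // _ _ /(_ x (mem_head x c)); rewrite inE.
have twin b : {in V, forall a, exists2 u, u \in V :\ a &
    (if b then u.1 == a.1 else u.2 == a.2)}.
  move=> a aV; have [u uV /andP[au e]] := V_leafless a b aV.
  by exists u; rewrite ?inE ?uV 1?eq_sym ?au //; case: b e; rewrite eq_sym.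
have rows_le : 2 * #|rows V| <= #|V|.
  apply: double_card_imset_le => a aV.
  by have [u ? /eqP] := twin true a aV; exists u.
have cols_le : 2 * #|cols V| <= #|V|.
  apply: double_card_imset_le => a aV.
  by have [u ? /eqP] := twin false a aV; exists u.
have comp_gt0 : 0 < #|components V|.
  by rewrite card_gt0; apply/set0Pn; exists (component V v); apply: imset_f.
split; first lia.
split=> [V_forest|]; first by have := leafless_not_forest V_leafless vV.
lia.
Qed.

Lemma card_rows_le V : #|rows V| <= m.
Proof. by have := max_card (mem (rows V)); rewrite card_ord. Qed.

Lemma card_cols_le V : #|cols V| <= n.
Proof. by have := max_card (mem (cols V)); rewrite card_ord. Qed.

Lemma complete_card_rows_cols V : complete V <-> #|rows V| = m /\ #|cols V| = n.
Proof.
have rowsE := card_imset_surj (fun v : T => v.1) V; rewrite card_ord in rowsE.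
have colsE := card_imset_surj (fun v : T => v.2) V; rewrite card_ord in colsE.
rewrite /rows /cols rowsE colsE; split=> [[rowsV colsV]|[rowsV colsV]]; split.
- by move=> i; have [j ij] := rowsV i; exists (i, j).
- by move=> j; have [i ij] := colsV j; exists (i, j).
- by move=> i; have [[i' j] ijV /= <-] := rowsV i; exists j.
- by move=> j; have [[i j'] ijV /= <-] := colsV j; exists i.
Qed.
End RookGraph.

Theorem proposition1p1 (m n : nat) (hm : 2 <= m) (hn : 2 <= n)
    (V : {set vtx m n}) :
  (forall k : nat, forest V -> #|components V| = k ->
     (complete V <-> #|V| = m + n - k)) /\
  (#|V| = m + n - 1 -> (tree V <-> complete V /\ connectedV V)) /\
  (complete V -> connectedV V ->
     m + n - 1 <= #|V| /\ (#|V| = m + n - 1 <-> tree V)).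
Proof.
have [lines_le forestE] := card_rows_cols V.
have rows_le := card_rows_le V; have cols_le := card_cols_le V.
have rows_card : #|rows V| <= #|V| := leq_imset_card _ _.
have one_component : connectedV V -> 0 < #|V| -> #|components V| = 1.
  by move=> V_conn /card_gt0P[v vV]; apply: card_components_connected vV.
split.
  move=> k /forestE card_forest <-; rewrite complete_card_rows_cols.
  by split=> [[rowsV colsV]|card_V]; [|split]; lia.
split.
  move=> card_V; split=> [[V_conn V_forest]|[V_compl V_conn]].
    have := forestE.1 V_forest; rewrite one_component // ?card_V; last lia.
    by split=> //; apply/complete_card_rows_cols; lia.
  have /complete_card_rows_cols[rowsV colsV] := V_compl.
  by split=> //; apply/forestE; rewrite one_component //; lia.
move=> /complete_card_rows_cols[rowsV colsV] V_conn.
have one : #|components V| = 1 by apply: one_component V_conn _; lia.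
split; first lia.
split=> [card_V|[_ /forestE]]; last lia.
by split=> //; apply/forestE; lia.
Qed.
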